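(* There exist universal constants $C,C'>0$ such that the following holds. For every $m>0$, every $\alpha,\beta\in(0,1/3)$, every $\epsilon\in(0,1)$ and every odd $n\in\mathbb{N}$ with $n\epsilon\ge C\ln(1/(\alpha\beta))$, and every $D\in\mathcal{CTM}$, with probability at least $1-\beta$, $$p_\alpha(D,\mathtt{DPExpMed}_\alpha(D))\le \frac{C'}{\epsilon}\max\left[1,\ln\frac{1}{\alpha\beta n\epsilon}\right].$$
   Context: $V=[-m/2,m/2]$. A dataset is $D=(x_1,\dots,x_n)\in V^n$, indexed so that $x_1\le\dots\le x_n$, with median $\mathcal{T}(D)=x_{\lceil n/2\rceil}$. $\mathcal{CTM}$ is the set of datasets with $|x_{i+1}-x_i|\ge|x_{j+1}-x_j|$ for all $1\le i<j\le\lceil n/2\rceil-1$ and $|x_i-x_{i-1}|\ge|x_j-x_{j-1}|$ for all $\lceil n/2\rceil+1\le j<i\le n$. The percentile loss $q(D,a)$ for $a\in V$ is: $\min\{|\lceil n/2\rceil-i|: a\in[x_i,\mathcal{T}(D)]\}$ if $a\in[x_1,\mathcal{T}(D)]$; $\min\{|\lceil n/2\rceil-i|: a\in[\mathcal{T}(D),x_i]\}$ if $a\in(\mathcal{T}(D),x_n]$; $\lceil n/2\rceil$ otherwise. The widened loss is $p_\alpha(D,\ell)=\min_{a\in V:|a-\ell|\le\alpha m}q(D,a)$. $\mathtt{DPExpMed}_\alpha(D)$ is the random point of $V$ with density proportional to $\exp(-\frac{\epsilon}{2}p_\alpha(D,\ell))$. *)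

From HB Require Import structures.
From mathcomp Require Import all_boot all_order all_algebra.
From mathcomp Require Import all_classical all_reals all_analysis.
From mathcomp Require Import Rstruct.
Set Implicit Arguments. Unset Strict Implicit. Unset Printing Implicit Defensive.
Import Order.TTheory GRing.Theory Num.Theory.
Local Open Scope ring_scope.
Local Open Scope classical_set_scope.

Section DPMed.
Variable R : realType.

Definition Vset (m : R) : set R := `[- (m / 2), m / 2]%classic.

(* A dataset D = (x_1,...,x_n) is represented by x : nat -> R, of which only
   the entries x 1, ..., x n are used (1-indexed as in the paper). *)
Definition is_dataset (m : R) (n : nat) (x : nat -> R) : Prop :=
  (forall i, (1 <= i <= n)%N -> x i \in `[- (m / 2), m / 2]) /\
  (forall i, (1 <= i < n)%N -> x i <= x i.+1).

Definition medidx (n : nat) : nat := n.+1./2.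
Definition med (n : nat) (x : nat -> R) : R := x (medidx n).

Definition natdist (a b : nat) : nat := (a - b) + (b - a).

Definition CTM (n : nat) (x : nat -> R) : Prop :=
  (forall i j, (1 <= i)%N -> (i < j)%N -> (j <= (medidx n).-1)%N ->
     `|x j.+1 - x j| <= `|x i.+1 - x i|) /\
  (forall i j, ((medidx n).+1 <= j)%N -> (j < i)%N -> (i <= n)%N ->
     `|x j - x j.-1| <= `|x i - x i.-1|).

Definition qloss (n : nat) (x : nat -> R) (a : R) : nat :=
  let k := medidx n in
  let T := med n x in
  if (x 1%N <= a) && (a <= T) then
    \big[minn/k]_(1 <= i < n.+1 | (x i <= a) && (a <= T)) natdist k i
  else if (T < a) && (a <= x n) then
    \big[minn/k]_(1 <= i < n.+1 | (T <= a) && (a <= x i)) natdist k i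
  else k.

(* widened loss p_alpha(D,l) = min over a in V with |a - l| <= alpha m of
   q(D,a); written as an infimum (the set is a nonempty set of naturals for
   l in V, so the infimum is attained, i.e. it is the minimum). *)
Definition ploss (m alpha : R) (n : nat) (x : nat -> R) (l : R) : R :=
  inf [set ((qloss n x a)%:R : R) | a in
        [set a | Vset m a /\ `|a - l| <= alpha * m]].

Definition dens (m alpha eps : R) (n : nat) (x : nat -> R) (l : R) : R :=
  expR (- (eps / 2) * ploss m alpha n x l).

Definition DPExpMed_prob (m alpha eps : R) (n : nat) (x : nat -> R)
    (A : set R) : R :=
  fine (\int[lebesgue_measure]_(l in Vset m `&` A) (dens m alpha eps n x l)%:E)
  / fine (\int[lebesgue_measure]_(l in Vset m) (dens m alpha eps n x l)%:E).

End DPMed.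

(* On the data universe V, the widened loss p_alpha(D, l) is the number of
   indices j < ceil(n/2) such that l lies outside the band
   [x_(k-j) - alpha m, x_(k+j) + alpha m] around the median x_k.  The bands are
   nested, so the density of DPExpMed is q^j on the j-th shell, q = exp(-eps/2),
   while the innermost band contains an interval of length alpha m of density 1,
   which bounds the normalising mass from below.  For CTM data the gaps
   x_(i+1) - x_i grow away from the median, hence each of the first k/2 shells
   has length O(m/n): the mass outside the band t is a geometric series
   O(m q^t / (n eps)) plus at most m q^(k/2).  For t about
   (1/eps) ln(1/(alpha beta n eps)), and with n eps >= C ln(1/(alpha beta)),
   both terms are at most alpha beta m / 2, i.e. a beta fraction of the
   normalising mass. *)

From mathcomp Require Import Rstruct.
From mathcomp Require Import all_boot all_order all_algebra.
From mathcomp Require Import all_classical all_reals all_analysis.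
From mathcomp Require Import zify ring lra measurable_realfun.
Import Order.TTheory GRing.Theory Num.Theory.
Local Open Scope ring_scope.
Local Open Scope classical_set_scope.
Set Implicit Arguments. Unset Strict Implicit. Unset Printing Implicit Defensive.

Lemma bigmin_leq_has (I : Type) (r : seq I) (P : pred I) (F : I -> nat) k j :
  (j < k)%N ->
  (\big[minn/k]_(i <- r | P i) F i <= j)%N = has (fun i => P i && (F i <= j)%N) r.
Proof.
move=> jk; elim: r => [|a r IH]; first by rewrite big_nil /= leqNgt jk.
by rewrite big_cons /=; case: (P a) => //=; rewrite geq_min IH.
Qed.

Lemma count_iota_leq (a : pred nat) K j :
  (forall i i', (i <= i' < K)%N -> a i' -> a i) -> (j < K)%N ->
  (count a (iota 0 K) <= j)%N = ~~ a j.
Proof.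
move=> a_down jK.
have -> : iota 0 K = iota 0 j ++ j :: iota j.+1 (K - j.+1).
  by rewrite -[in LHS](subnKC (ltnW jK)) iotaD -(subnSK jK).
rewrite count_cat /=; have [aj|naj] /= := boolP (a j).
  suff -> : count a (iota 0 j) = j by lia.
  apply/eqP; rewrite -[j in _ == j](size_iota 0 j) -all_count.
  by apply/allP => i; rewrite mem_iota => /andP [_ ij]; apply: (a_down i j) => //; lia.
suff -> : count a (iota j.+1 (K - j.+1)) = 0%N.
  by rewrite !addn0 -[leqRHS](size_iota 0 j) count_size.
apply/eqP; rewrite -leqn0 leqNgt -has_count; apply/hasPn => i.
by rewrite mem_iota => /andP [ji iK]; apply: contra naj; apply: a_down; lia.
Qed.

Lemma prod_if_count (R : comPzSemiRingType) (s : seq nat) (b : pred nat) (q : R) :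
  \prod_(j <- s) (if b j then 1 else q) = q ^+ count (predC b) s.
Proof.
elim: s => [|a s IH]; first by rewrite big_nil expr0.
by rewrite big_cons IH /=; case: (b a); rewrite ?mul1r // add1n exprS.
Qed.

Lemma itv_near (R : realFieldType) (a b e l : R) :
  a <= b -> 0 <= e -> a - e <= l <= b + e -> exists2 c, a <= c <= b & `|c - l| <= e.
Proof.
move=> ab e0 /andP [al lb].
have [la|al'] := ltP l a.
  by exists a; rewrite ?lexx ?ab // ler_norml; apply/andP; split; lra.
have [bl|lb'] := ltP b l.
  by exists b; rewrite ?lexx ?ab // ler_norml; apply/andP; split; lra.
by exists l; rewrite ?al' ?lb' // subrr normr0.
Qed.

Lemma inf_eq_min (R : realType) (E : set R) (e : R) : E e -> lbound E e -> inf E = e.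
Proof.
move=> Ee lbe; apply/eqP; rewrite eq_le lb_le_inf ?andbT //; last by exists e.
by apply: ge_inf => //; exists e.
Qed.

Lemma lebesgue_measure_itvcc (R : realType) (a b : R) : a <= b ->
  lebesgue_measure [set` `[a, b]%R] = (b - a)%:E.
Proof.
by rewrite lebesgue_measure_itv /= lte_fin => ab; case: ltgtP ab => // ->; rewrite subrr.
Qed.

Lemma telescope_ge (R : realFieldType) (x : nat -> R) (g : R) a p :
  (forall u, (u < p)%N -> g <= x (a + u).+1 - x (a + u)%N) ->
  p%:R * g <= x (a + p)%N - x a.
Proof.
elim: p => [|p IH] gap; first by rewrite mul0r addn0 subrr.
have := IH (fun u up => gap u (ltnW up)); have := gap p (ltnSn p).
by rewrite -natr1 mulrDl mul1r addnS; lra.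
Qed.

Lemma ratio_ge (R : realFieldType) (M P Q c beta : R) :
  0 < M -> 0 <= beta -> M = P + Q -> Q <= beta * c -> c <= M -> 1 - beta <= P / M.
Proof.
move=> M0 b0 MPQ Qc cM; rewrite ler_pdivlMr //.
by have := ler_wpM2l b0 cM; lra.
Qed.

Lemma dataset_mono (R : realType) (m : R) n x i j :
  is_dataset m n x -> (1 <= i)%N -> (i <= j <= n)%N -> x i <= x j.
Proof.
move=> [_ x_step] i1; elim: j => [|j IH]; first by rewrite leqn0 => /andP [/eqP -> _].
rewrite leq_eqVlt => /andP [/orP [/eqP -> //|ij] jn].
by apply: le_trans (IH _) (x_step _ _); lia.
Qed.

Lemma medidx_odd n : odd n -> (medidx n + medidx n = n.+1)%N.
Proof. by move=> n_odd; rewrite addnn /medidx -[RHS]odd_double_half /= n_odd. Qed.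

Lemma itv_inside (R : realFieldType) (c w y : R) :
  0 <= w -> w <= c -> - c <= y <= c ->
  exists a, [/\ - c <= a, a + w <= c, y - w <= a & a <= y].
Proof.
move=> w0 wc /andP [cy yc].
by have [y0|y0] := lerP y 0; [exists y | exists (y - w)]; split; lra.
Qed.

(** * Bands around the median and the widened loss *)

Section Bands.
Context {R : realType} (m alpha : R) (n : nat) (x : nat -> R).
Hypotheses (xD : is_dataset m n x) (n_odd : odd n).
Local Notation k := (medidx n).

Let xle i j : (1 <= i)%N -> (i <= j <= n)%N -> x i <= x j.
Proof. exact: dataset_mono xD. Qed.

Let kk : (k + k = n.+1)%N. Proof. exact: medidx_odd. Qed.

Lemma qloss_le_medidx a : (qloss n x a <= k)%N.
Proof. by rewrite /qloss /=; do 2?case: ifP => _; try apply: (@bigmin_le_id _ nat). Qed.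

Lemma qloss_le a j : (j < k)%N -> (qloss n x a <= j)%N = (x (k - j) <= a <= x (k + j)).
Proof.
move=> jk; rewrite /qloss /med /=.
case: ifP => [/andP [x1a ak]|not_low].
  rewrite bigmin_leq_has //; apply/hasP/idP => [[i]|/andP [lo_a a_hi]].
    rewrite mem_index_iota /natdist => iN /andP [/andP [xia _] ij].
    by rewrite (le_trans _ xia) ?(le_trans ak) ?xle //; lia.
  exists (k - j)%N; first by rewrite mem_index_iota; lia.
  by rewrite lo_a ak /natdist; lia.
case: ifP => [/andP [ka an]|not_high].
  rewrite bigmin_leq_has //; apply/hasP/idP => [[i]|/andP [lo_a a_hi]].
    rewrite mem_index_iota /natdist => iN /andP [/andP [_ axi] ij].
    by rewrite (le_trans _ (ltW ka)) ?(le_trans axi) ?xle //; lia.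
  exists (k + j)%N; first by rewrite mem_index_iota; lia.
  by rewrite a_hi (ltW ka) /natdist; lia.
rewrite leqNgt jk; apply/esym/negbTE/negP => /andP [lo_a a_hi].
have x1a : x 1%N <= a by rewrite (le_trans _ lo_a) ?xle //; lia.
have an : a <= x n by rewrite (le_trans a_hi) ?xle //; lia.
by move: not_low not_high; rewrite x1a an /= andbT => /negbT; rewrite -ltNge => ->.
Qed.

Definition band (j : nat) : interval R :=
  `[x (k - j) - alpha * m, x (k + j) + alpha * m]%R.

Definition depth (l : R) : nat := count (fun j => l \notin band j) (iota 0 k).

Lemma band_nested j j' : (j <= j' < k)%N -> [set` band j] `<=` [set` band j'].
Proof.
move=> jj' l /=; rewrite !in_itv /= => /andP [lo_l l_hi]; apply/andP; split.
  by apply: le_trans lo_l; rewrite lerD2r xle //; lia.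
by apply: le_trans l_hi _; rewrite lerD2r xle //; lia.
Qed.

Lemma depth_le l j : (j < k)%N -> (depth l <= j)%N = (l \in band j).
Proof.
move=> jk; rewrite /depth count_iota_leq ?negbK // => i i' ii'.
by apply: contra; exact: band_nested.
Qed.

Lemma depth_le_medidx l : (depth l <= k)%N.
Proof. by rewrite -[leqRHS](size_iota 0 k) count_size. Qed.

Lemma x_in_V i : (1 <= i <= n)%N -> - (m / 2) <= x i <= m / 2.
Proof. by move=> iN; have /set_mem := xD.1 i iN; rewrite /= in_itv. Qed.

Hypothesis am_ge0 : 0 <= alpha * m.

Lemma ploss_depth l : Vset m l -> ploss m alpha n x l = (depth l)%:R.
Proof.
move=> lV.
have depth_lb a : `|a - l| <= alpha * m -> (depth l <= qloss n x a)%N.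
  move=> al; have [qk|kq] := ltnP (qloss n x a) k; last first.
    exact: leq_trans (depth_le_medidx l) kq.
  have /andP [lo_a a_hi] : x (k - qloss n x a) <= a <= x (k + qloss n x a).
    by rewrite -qloss_le.
  rewrite depth_le // in_itv /=; move: al; rewrite ler_norml => /andP [? ?].
  by apply/andP; split; lra.
have [a [aV al] qa] : exists2 a, Vset m a /\ `|a - l| <= alpha * m
                                 & (qloss n x a <= depth l)%N.
  have [pk|kp] := ltnP (depth l) k; last first.
    exists l; first by rewrite subrr normr0.
    exact: leq_trans (qloss_le_medidx l) kp.
  have := depth_le l pk; rewrite leqnn in_itv /= => /esym lp.
  have xkk : x (k - depth l) <= x (k + depth l) by rewrite xle //; lia.
  have [c cp cl] := itv_near xkk am_ge0 lp.
  exists c; last by rewrite qloss_le.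
  split => //; rewrite /Vset /= in_itv /=.
  have /andP [? ?] := x_in_V (i := (k - depth l)%N) ltac:(lia).
  have /andP [? ?] := x_in_V (i := (k + depth l)%N) ltac:(lia).
  by move: cp => /andP [? ?]; apply/andP; split; lra.
rewrite /ploss; apply: inf_eq_min => [|_ [b [_ bl] <-]]; last by rewrite ler_nat depth_lb.
by exists a => //; congr _%:R; apply/eqP; rewrite eqn_leq qa depth_lb.
Qed.

End Bands.

(** * Mass of a bounded density *)

Section Mass.
Context {R : realType} {d} {T : measurableType d} (mu : {measure set T -> \bar R}).
Context (f : T -> R) (V : set T).
Hypotheses (mf : measurable_fun setT f) (f_ge0 : forall t, 0 <= f t).
Hypotheses (f_le1 : forall t, f t <= 1) (mV : measurable V) (muV : (mu V < +oo)%E).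

Definition mass (S : set T) : R := fine (\int[mu]_(t in S) (f t)%:E).

Let mfE S : measurable S -> measurable_fun S (fun t => (f t)%:E).
Proof. by move=> mS; apply/measurable_EFinP; exact: measurable_funS mf. Qed.

Lemma integral_le_cst S c : measurable S -> (forall t, S t -> f t <= c) ->
  (\int[mu]_(t in S) (f t)%:E <= c%:E * mu S)%E.
Proof.
move=> mS fc; rewrite -integral_cst //; apply: ge0_le_integral => //.
- by move=> t _; rewrite lee_fin.
- exact: mfE.
Qed.

Lemma integral_ge_cst S c : measurable S -> 0 <= c -> (forall t, S t -> c <= f t) ->
  (c%:E * mu S <= \int[mu]_(t in S) (f t)%:E)%E.
Proof.
move=> mS c0 cf; rewrite -(integral_cst _ mS).
by apply: ge0_le_integral => //; exact: mfE.
Qed.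

Lemma integral_mass S : measurable S -> S `<=` V ->
  (\int[mu]_(t in S) (f t)%:E = (mass S)%:E)%E.
Proof.
move=> mS SV; rewrite fineK // ge0_fin_numE; last by apply: integral_ge0 => t _; rewrite lee_fin.
apply: le_lt_trans (integral_le_cst mS (fun t _ => f_le1 t)) _.
by rewrite mul1e; exact: le_lt_trans (le_measure _ (mem_set mS) (mem_set mV) SV) muV.
Qed.

Lemma mass_ge0 S : 0 <= mass S.
Proof. by apply/fine_ge0/integral_ge0 => t _; rewrite lee_fin. Qed.

Lemma mass_set0 : mass set0 = 0.
Proof. by rewrite /mass integral_set0. Qed.

Lemma mass_le S c b : measurable S -> S `<=` V -> 0 <= c ->
  (forall t, S t -> f t <= c) -> (mu S <= b%:E)%E -> mass S <= c * b.
Proof.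
move=> mS SV c0 fc Sb; rewrite -lee_fin -integral_mass // EFinM.
exact: le_trans (integral_le_cst mS fc) (lee_wpmul2l _ Sb).
Qed.

Lemma mass_ge S c b : measurable S -> S `<=` V -> 0 <= c ->
  (forall t, S t -> c <= f t) -> mu S = b%:E -> c * b <= mass S.
Proof.
move=> mS SV c0 cf Sb; rewrite -lee_fin -integral_mass // EFinM -Sb.
exact: integral_ge_cst.
Qed.

Lemma massID S B : measurable S -> measurable B -> S `<=` V ->
  mass S = mass (S `&` B) + mass (S `\` B).
Proof.
move=> mS mB SV; apply: EFin_inj.
rewrite EFinD -!integral_mass //; last 4 first.
- exact: measurableD.
- by apply: subset_trans SV; exact: subDsetl.
- exact: measurableI.
- by apply: subset_trans SV; exact: subIsetl.
rewrite -[in LHS](setUIDK S B) ge0_integral_setU //.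
- exact: measurableI.
- exact: measurableD.
- by rewrite setUIDK; exact: mfE.
- by move=> t _; rewrite lee_fin.
- by apply/disj_set2P/seteqP; split => t // [[_ tB] [_ ntB]].
Qed.

Lemma le_mass S S' : measurable S -> measurable S' -> S `<=` S' -> S' `<=` V ->
  mass S <= mass S'.
Proof.
move=> mS mS' SS' S'V; rewrite (massID mS' mS) // setIidr //.
by rewrite lerDl mass_ge0.
Qed.

Lemma mass_shells (B : nat -> set T) (q h : R) t s :
  (forall j, measurable (B j)) ->
  (forall i j, (t <= i <= j)%N -> (j <= s)%N -> B i `<=` B j) ->
  0 <= q <= 1 -> 0 <= h -> (t <= s)%N ->
  (forall j, (t <= j < s)%N -> (mu (B j.+1 `\` B j) <= h%:E)%E) ->
  (forall j u, (t <= j < s)%N -> V u -> B j.+1 u -> ~ B j u -> f u <= q ^+ j.+1) ->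
  mass (V `&` B s `\` B t) * (1 - q) <= h * q ^+ t.+1.
Proof.
move=> mB B_nested /andP [q0 q1] h0 ts mu_shell f_shell.
suff shells e : (t + e <= s)%N ->
    mass (V `&` B (t + e)%N `\` B t) * (1 - q) <= h * (q ^+ t.+1 - q ^+ (t + e).+1).
  have := shells (s - t)%N; rewrite subnKC // => /(_ (leqnn s)) shells_s.
  by have := mulr_ge0 h0 (exprn_ge0 s.+1 q0); lra.
elim: e => [|e IH] es.
  rewrite addn0 subrr mulr0 (_ : _ `\` _ = set0) ?mass_set0 ?mul0r //.
  by apply/seteqP; split => u // [[_ Btu] /(_ Btu)].
have tes : (t <= t + e < s)%N by lia.
rewrite addnS; set j := (t + e)%N in IH tes *.
rewrite (massID (B := B j)); last 3 first.
- by apply: measurableD => //; exact: measurableI.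
- exact: mB.
- by move=> u [[]].
have -> : (V `&` B j.+1 `\` B t) `&` B j = V `&` B j `\` B t.
  apply/seteqP; split => u; first by move=> [[[? ?] ?] ?].
  move=> [[Vu Bu] nBu]; do 3?split => //.
  by apply: (B_nested j) Bu; lia.
have -> : (V `&` B j.+1 `\` B t) `\` B j = V `&` B j.+1 `\` B j.
  apply/seteqP; split => u; first by move=> [[? _] ?].
  move=> [[Vu Bu] nBu]; do 2?split => //.
  by move=> Btu; apply: nBu; apply: (B_nested t) Btu; lia.
have shell_le : mass (V `&` B j.+1 `\` B j) <= q ^+ j.+1 * h.
  apply: mass_le => //.
  - by apply: measurableD => //; exact: measurableI.
  - by move=> u [[]].
  - exact: exprn_ge0.
  - by move=> u [[Vu Bu] nBu]; apply: f_shell.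
  - apply: le_trans (mu_shell _ tes); apply: le_measure; rewrite ?inE.
    + by apply: measurableD => //; exact: measurableI.
    + exact: measurableD.
    + by move=> u [[]].
have q1' : 0 <= 1 - q by rewrite subr_ge0.
have := ler_wpM2r q1' shell_le; have := IH ltac:(lia).
rewrite [q ^+ j.+2]exprS; lra.
Qed.

End Mass.

(** * The exponential mechanism on CTM datasets *)

Section Mechanism.
Context {R : realType} (m alpha : R) (n : nat) (x : nat -> R).
Hypotheses (xD : is_dataset m n x) (n_odd : odd n) (m_gt0 : 0 < m) (alpha_gt0 : 0 < alpha).
Local Notation k := (medidx n).
Local Notation band := (band m alpha n x).
Local Notation depth := (depth m alpha n x).

Let kk : (k + k = n.+1)%N. Proof. exact: medidx_odd. Qed.
Let k_range : (1 <= k <= n)%N. Proof. lia. Qed.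
Let half_k_lt : (k./2 < k)%N. Proof. lia. Qed.
Let am_ge0 : 0 <= alpha * m. Proof. by rewrite mulr_ge0 // ltW. Qed.

Lemma measurable_band j : measurable [set` band j].
Proof. exact: measurable_itv. Qed.

Lemma measurable_pow_depth (q : R) : measurable_fun setT (fun l => q ^+ depth l).
Proof.
rewrite (_ : (fun l => _) = fun l => \prod_(j <- iota 0 k) (if l \in band j then 1 else q)).
  apply: measurable_prod => j _; apply: measurable_fun_ifT => //.
  by apply: (measurable_fun_bool true); rewrite setTI; exact: measurable_band.
by apply/funext => l; rewrite prod_if_count.
Qed.

Lemma dens_pow_depth eps l :
  Vset m l -> dens m alpha eps n x l = expR (- (eps / 2)) ^+ depth l.
Proof. by move=> lV; rewrite /dens (ploss_depth xD n_odd am_ge0 lV) -expRM_natr mulNr. Qed.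

Lemma gaps_in_V_le a p g : (1 <= a)%N -> (a + p <= n)%N ->
  (forall u, (u < p)%N -> g <= x (a + u).+1 - x (a + u)%N) -> p%:R * g <= m.
Proof.
move=> a1 apn /telescope_ge.
have /andP [? ?] := x_in_V xD (i := a) ltac:(lia).
have /andP [? ?] := x_in_V xD (i := (a + p)%N) ltac:(lia).
lra.
Qed.

Hypothesis x_ctm : CTM n x.
Local Notation kp := (k - k./2 - 1)%N.

(* By CTM, a gap at distance at most k/2 from the median is no larger than any
   of the kp gaps beyond distance k/2 on the same side, and these fit in V. *)

Lemma left_gap_le i : (1 <= i <= k./2)%N -> kp%:R * (x (k - i).+1 - x (k - i)%N) <= m.
Proof.
move=> ik; apply: (gaps_in_V_le (a := 1%N)) => [||u ukp]; try lia.
have := x_ctm.1 (1 + u)%N (k - i)%N isT ltac:(lia) ltac:(lia).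
by rewrite !ger0_norm // subr_ge0 (dataset_mono xD) //; lia.
Qed.

Lemma right_gap_le i : (1 <= i <= k./2)%N -> kp%:R * (x (k + i)%N - x (k + i).-1) <= m.
Proof.
move=> ik; apply: (gaps_in_V_le (a := (k + k./2)%N)) => [||u ukp]; try lia.
have := x_ctm.2 (k + k./2 + u).+1 (k + i)%N ltac:(lia) ltac:(lia) ltac:(lia).
by rewrite /= !ger0_norm // subr_ge0 (dataset_mono xD) //; lia.
Qed.

Lemma shell_measure j : (3 <= k)%N -> (j < k./2)%N ->
  (lebesgue_measure ([set` band j.+1] `\` [set` band j]) <= (2 * m / kp%:R)%:E)%E.
Proof.
move=> k3 jk; rewrite /band.
set lo1 := x (k - j.+1)%N - _; set lo0 := x (k - j)%N - _.
set hi1 := x (k + j.+1)%N + _; set hi0 := x (k + j)%N + _.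
have lo_le : lo1 <= lo0 by rewrite lerD2r (dataset_mono xD) //; lia.
have hi_le : hi0 <= hi1 by rewrite lerD2r (dataset_mono xD) //; lia.
have shell_sub : [set` `[lo1, hi1]%R] `\` [set` `[lo0, hi0]%R] `<=`
                 [set` `[lo1, lo0]%R] `|` [set` `[hi0, hi1]%R].
  move=> l [] /=; rewrite !in_itv /= => /andP [l1 l2] /negP.
  rewrite negb_and -!ltNge => /orP [?|?]; [left|right]; rewrite /= ?in_itv /=.
    by rewrite l1 ltW.
  by rewrite l2 ltW.
have mshell : measurable ([set` `[lo1, hi1]%R] `\` [set` `[lo0, hi0]%R]).
  by apply: measurableD; exact: measurable_itv.
have mU : measurable ([set` `[lo1, lo0]%R] `|` [set` `[hi0, hi1]%R]).
  by apply: measurableU; exact: measurable_itv.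
apply: le_trans (le_measure (@lebesgue_measure R) (mem_set mshell) (mem_set mU) shell_sub) _.
apply: le_trans (measureU2 (@lebesgue_measure R) _ _) _; try exact: measurable_itv.
rewrite [X in (X <= _)%E](_ : _ = ((lo0 - lo1)%:E + (hi1 - hi0)%:E)%E); last first.
  by congr (_ + _)%E; exact: lebesgue_measure_itvcc.
rewrite -EFinD lee_fin.
have kp_gt0 : (0 : R) < kp%:R by rewrite ltr0n; lia.
rewrite ler_pdivlMr // mulrDl.
have := left_gap_le (i := j.+1) ltac:(lia); have := right_gap_le (i := j.+1) ltac:(lia).
rewrite /lo1 /lo0 /hi1 /hi0.
have -> : (k - j)%N = (k - j.+1).+1 by lia.
have -> : (k + j)%N = (k + j.+1).-1 by lia.
lra.
Qed.

Variable eps : R.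
Hypothesis eps_gt0 : 0 < eps.
Local Notation q := (expR (- (eps / 2))).
Local Notation f := (fun l => q ^+ depth l).
Local Notation V := (Vset m).
Local Notation mass := (mass lebesgue_measure f).

Let q_gt0 : 0 < q. Proof. exact: expR_gt0. Qed.
Let q_lt1 : q < 1. Proof. by rewrite expR_lt1 oppr_lt0 divr_gt0. Qed.
Let f_ge0 l : 0 <= f l. Proof. exact/exprn_ge0/ltW. Qed.
Let f_le1 l : f l <= 1. Proof. by apply/exprn_ile1; exact: ltW. Qed.
Let mf : measurable_fun setT f. Proof. exact: measurable_pow_depth. Qed.
Let mV : measurable V. Proof. exact: measurable_itv. Qed.
Let muV : lebesgue_measure V = m%:E.
Proof. by rewrite lebesgue_measure_itvcc ?opprK -?splitr //; have := m_gt0; lra. Qed.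
Let muV_fin : (lebesgue_measure V < +oo)%E. Proof. by rewrite muV ltry. Qed.

Lemma DPExpMed_prob_mass A : DPExpMed_prob m alpha eps n x A = mass (V `&` A) / mass V.
Proof.
rewrite /DPExpMed_prob /mass; congr (fine _ / fine _); apply: eq_integral => l /set_mem.
  by move=> [lV _]; rewrite dens_pow_depth.
by move=> lV; rewrite dens_pow_depth.
Qed.

(* Band 0 contains an interval of length alpha m inside V, of density 1. *)
Lemma mass_V_ge : alpha <= 1 / 2 -> alpha * m <= mass V.
Proof.
move=> a_half; have am0 := am_ge0.
have xk_V := x_in_V xD k_range.
have am_half : alpha * m <= m / 2 by have := ler_wpM2r (ltW m_gt0) a_half; lra.
have [a0 [a0_lo a0_hi a0_x1 a0_x2]] := itv_inside am0 am_half (y := x k) xk_V.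
set J := [set` `[a0, a0 + alpha * m]%R].
have mJ : measurable J by exact: measurable_itv.
have JV : J `<=` V.
  by move=> l; rewrite /J /Vset /= !in_itv /= => /andP [? ?]; apply/andP; split; lra.
have f_J l : J l -> 1 <= f l.
  move=> Jl; suff -> : depth l = 0%N by rewrite expr0.
  apply/eqP; rewrite -leqn0 depth_le //; last by case/andP: k_range.
  move: Jl; rewrite /J /band /= !in_itv /= subn0 addn0 => /andP [? ?].
  by apply/andP; split; lra.
have J_len : lebesgue_measure J = (alpha * m)%:E.
  by rewrite lebesgue_measure_itvcc; [congr EFin; ring | lra].
apply: le_trans (le_mass (mu := lebesgue_measure) mf f_ge0 f_le1 mV muV_fin mJ mV JV _) => //.
rewrite -[X in X <= _]mul1r.
exact: (mass_ge (mu := lebesgue_measure) mf f_ge0 f_le1 mV muV_fin mJ JV ler01 f_J J_len).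
Qed.

Lemma mass_outside_band j : (j < k)%N -> mass (V `\` [set` band j]) <= q ^+ j.+1 * m.
Proof.
move=> jk; have mD : measurable (V `\` [set` band j]) by exact: measurableD.
have f_out l : (V `\` [set` band j]) l -> f l <= q ^+ j.+1.
  move=> [_ /negP]; rewrite -depth_le // -ltnNge => jd.
  by apply: ler_wiXn2l jd; exact: ltW.
have mu_out : (lebesgue_measure (V `\` [set` band j]) <= m%:E)%E.
  by rewrite -muV; apply: (le_measure (@lebesgue_measure R)); rewrite ?inE //; exact: subDsetl.
exact: (mass_le (mu := lebesgue_measure) mf f_ge0 f_le1 mV muV_fin mD (@subDsetl _ _ _)
                (exprn_ge0 _ (ltW q_gt0)) f_out mu_out).
Qed.

Lemma mass_shells_band t s : (3 <= k)%N -> (t <= s <= k./2)%N ->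
  mass (V `&` [set` band s] `\` [set` band t]) * (1 - q) <= 2 * m / kp%:R * q ^+ t.+1.
Proof.
move=> k3 /andP [ts sk]; have sk' := leq_ltn_trans sk half_k_lt.
have h_ge0 : 0 <= 2 * m / kp%:R by rewrite divr_ge0 ?mulr_ge0 // ltW.
apply: (mass_shells (mu := lebesgue_measure) mf f_ge0 f_le1 mV muV_fin
         (B := fun j => [set` band j]) _ _ _ h_ge0 ts).
- by move=> j; exact: measurable_band.
- move=> i j /andP [_ ij] js; have ijk : (i <= j < k)%N by rewrite ij (leq_ltn_trans js sk').
  exact (band_nested xD n_odd ijk).
- by rewrite ltW //= ltW.
- by move=> j /andP [_ js]; apply: shell_measure => //; exact: leq_trans js sk.
- move=> j l /andP [_ js] _ _ /negP.
  rewrite -(depth_le _ xD n_odd _ (ltn_trans js sk')) -ltnNge => jd.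
  by apply: ler_wiXn2l jd; exact: ltW.
Qed.

Lemma mass_outside_band_le t : (3 <= k)%N -> (t < k)%N ->
  mass (V `\` [set` band t]) <= q ^+ (k./2).+1 * m + 2 * m / kp%:R * q ^+ t.+1 / (1 - q).
Proof.
move=> k3 tk; have q1 : 0 < 1 - q by rewrite subr_gt0.
have h_ge0 : 0 <= 2 * m / kp%:R by rewrite divr_ge0 ?mulr_ge0 // ltW.
have shells_ge0 : 0 <= 2 * m / kp%:R * q ^+ t.+1 / (1 - q).
  by apply: divr_ge0; [apply: mulr_ge0 => //; exact/exprn_ge0/ltW | exact: ltW].
have [kt|tk2] := leqP k./2 t.
  have qt : q ^+ t.+1 <= q ^+ (k./2).+1 by apply: ler_wiXn2l; rewrite ?ltW.
  have := ler_wpM2r (ltW m_gt0) qt; have := mass_outside_band tk; lra.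
have split : mass (V `\` [set` band t])
    = mass (V `&` [set` band k./2] `\` [set` band t]) + mass (V `\` [set` band k./2]).
  rewrite (massID (mu := lebesgue_measure) mf f_ge0 f_le1 mV muV_fin (B := [set` band k./2])).
  - congr (_ + _); congr mass; apply/seteqP; split => l.
    + by move=> [[Vl nt] kl]; split; [split|].
    + by move=> [[Vl kl] nt]; split; [split|].
    + by move=> [[Vl nt] nk]; split.
    + move=> [Vl nk]; split => //; split => // tl; apply: nk.
      have tk2' : (t <= k./2 < k)%N by rewrite ltnW.
      exact (band_nested xD n_odd tk2' tl).
  - by apply: measurableD => //; exact: measurable_band.
  - exact: measurable_band.
  - exact: subDsetl.
have := mass_shells_band (t := t) (s := k./2) k3 (introT andP (conj (ltnW tk2) (leqnn _))).
have := mass_outside_band half_k_lt.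
rewrite split -ler_pdivlMr //; lra.
Qed.

Lemma ploss_le_band l (tau : R) : Vset m l -> 0 <= tau -> (Num.truncn tau < k)%N ->
  (ploss m alpha n x l <= tau) = (l \in band (Num.truncn tau)).
Proof.
by move=> lV tau0 tk; rewrite (ploss_depth xD n_odd am_ge0 lV) -truncn_ge_nat // depth_le.
Qed.

Lemma DPExpMed_prob_ge beta tau : alpha <= 1 / 2 -> 0 <= beta -> 0 <= tau ->
  ((Num.truncn tau < k)%N -> mass (V `\` [set` band (Num.truncn tau)]) <= alpha * beta * m) ->
  1 - beta <= DPExpMed_prob m alpha eps n x [set l | ploss m alpha n x l <= tau].
Proof.
move=> a_half b0 tau0 tail; rewrite DPExpMed_prob_mass.
have Z := mass_V_ge a_half; have Z0 : 0 < mass V by apply: lt_le_trans Z; exact: mulr_gt0.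
have [tk|kt] := ltnP (Num.truncn tau) k; last first.
  rewrite (_ : V `&` _ = V); first by rewrite divff ?gt_eqF //; lra.
  apply/seteqP; split => [l [] //|l lV]; split => //=.
  rewrite (ploss_depth xD n_odd am_ge0 lV) -truncn_ge_nat //.
  by rewrite (leq_trans _ kt) // depth_le_medidx.
rewrite (_ : V `&` _ = V `&` [set` band (Num.truncn tau)]); last first.
  by apply/seteqP; split => l [lV]; rewrite /= ploss_le_band.
apply: (ratio_ge Z0 b0 _ _ Z).
  exact: (massID (mu := lebesgue_measure) mf f_ge0 f_le1 mV muV_fin mV (measurable_band _)).
by rewrite mulrA [beta * alpha]mulrC; exact: tail.
Qed.

End Mechanism.

(** * Numerical bounds *)

Section Numerics.
Context {R : realType}.
Implicit Types a e z Lam : R.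

Lemma expRN_ln_inv z : 0 < z -> expR (- ln (1 / z)) = z.
Proof. by move=> z0; rewrite div1r lnV ?posrE // opprK lnK. Qed.

Lemma ln_inv_ge a : 0 < a -> a < 1 / 9 -> 8 / 9 <= ln (1 / a).
Proof.
move=> a0 a9; rewrite div1r lnV ?posrE //.
by have := le_ln1Dx (x := a - 1) ltac:(lra); rewrite addrC subrK; lra.
Qed.

Lemma one_sub_expR_half_ge e : 0 <= e <= 1 -> e / 3 <= 1 - expR (- (e / 2)).
Proof.
move=> /andP [e0 e1].
have qE : expR (- (e / 2)) * expR (e / 2) = 1 by rewrite -expRD addNr expR0.
have := ler_wpM2l (ltW (expR_gt0 (- (e / 2)))) (expR_ge1Dx (e / 2)).
have : 0 <= (1 - expR (- (e / 2))) * (1 - e).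
  by rewrite mulr_ge0 ?subr_ge0 // expR_le1 oppr_le0 divr_ge0.
move: qE; generalize (expR (- (e / 2))) (expR (e / 2)) => q E qE.
by nra.
Qed.

Lemma expR_half_pow_le a e (n p : nat) : 0 < a -> a < 1 / 9 -> 0 <= e ->
  (n <= 4 * p)%N -> 16 * ln (1 / a) <= n%:R * e -> expR (- (e / 2)) ^+ p <= a / 2.
Proof.
move=> a0 a9 e0 np n_e; rewrite -expRM_natr.
have np' : n%:R <= 4 * p%:R :> R by rewrite -natrM ler_nat.
apply: (@le_trans _ _ (expR (- ln (1 / a) + - ln (1 / a)))).
  by rewrite ler_expR; have := ler_wpM2l e0 np'; lra.
by rewrite expRD expRN_ln_inv //; have := ler_wpM2l (ltW a0) (ltW a9); lra.
Qed.

Lemma expR_100_le Lam : 1 <= Lam -> 96 * expR (- (100 * Lam)) <= expR (- Lam).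
Proof.
move=> L1; have -> : - Lam = 99 * Lam + - (100 * Lam) by ring.
rewrite expRD; have := expR_ge1Dx (99 * Lam); have := expR_gt0 (- (100 * Lam)).
generalize (expR (99 * Lam)) (expR (- (100 * Lam))) => E F F0 E99.
have E96 : 96 <= E by lra.
by have := ler_wpM2r (ltW F0) E96; lra.
Qed.

(* For t >= 200 Lam / e, q^(t+1) <= exp(-100 Lam) <= a n e / 96, and
   96 = 3 * 16 * 2 absorbs 1 - q >= e/3, H n <= 16 m and the target a m / 2. *)
Lemma shells_term_le m a e Lam (n kp t : nat) :
  0 < m -> 0 < a -> 0 < e -> e <= 1 -> 1 <= Lam -> (0 < kp)%N -> (0 < n)%N ->
  (n <= 8 * kp)%N -> expR (- Lam) <= a * n%:R * e -> 200 / e * Lam < t.+1%:R ->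
  2 * m / kp%:R * expR (- (e / 2)) ^+ t.+1 / (1 - expR (- (e / 2))) <= a / 2 * m.
Proof.
move=> m0 a0 e0 e1 L1 kp0 n0 n_kp L_ane tau_t.
set q := expR (- (e / 2)); set H := 2 * m / kp%:R; set E := expR (- (100 * Lam)).
have q_E : q ^+ t.+1 <= E.
  have e100 : e / 2 * (200 / e * Lam) = 100 * Lam by field; rewrite gt_eqF.
  have e2 : 0 < e / 2 by rewrite divr_gt0.
  move: tau_t; rewrite -(ltr_pM2l e2) e100 => tau_t.
  by rewrite /q /E -expRM_natr ler_expR; lra.
have D_ge : e / 3 <= 1 - q by apply: one_sub_expR_half_ge; rewrite ltW.
have H0 : 0 <= H by rewrite /H divr_ge0 ?mulr_ge0 // ltW.
have Hn : H * n%:R <= 16 * m.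
  have HK : H * kp%:R = 2 * m by rewrite /H divfK // pnatr_eq0 -lt0n.
  have nK : n%:R <= 8 * kp%:R :> R by rewrite -natrM ler_nat.
  by have := ler_wpM2l H0 nK; lra.
have E0 : 0 <= E by exact/ltW/expR_gt0.
have n0' : (0 : R) < n%:R by rewrite ltr0n.
have HE : H * E <= a * m * e / 6.
  rewrite -(ler_pM2r n0').
  have m16 : 0 <= 16 * m by lra.
  have := ler_wpM2l m16 (le_trans (expR_100_le L1) L_ane); rewrite -/E.
  by have := ler_wpM2r E0 Hn; lra.
have am0 : 0 <= a / 2 * m by rewrite mulr_ge0 ?divr_ge0 // ltW.
rewrite ler_pdivrMr; last by apply: lt_le_trans D_ge; rewrite divr_gt0.
by have := ler_wpM2l H0 q_E; have := ler_wpM2l am0 D_ge; lra.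
Qed.

End Numerics.

Lemma medidx_large n : odd n -> (14 < n)%N ->
  [/\ 3 <= medidx n, 0 < medidx n - (medidx n)./2 - 1,
      n <= 8 * (medidx n - (medidx n)./2 - 1) & n <= 4 * ((medidx n)./2).+1]%N.
Proof. by move=> /medidx_odd kk n14; split; lia. Qed.

Theorem DPExpMed_accuracy (R : realType) (m alpha beta eps : R) (n : nat) (x : nat -> R) :
  0 < m -> 0 < alpha -> alpha < 1 / 3 -> 0 < beta -> beta < 1 / 3 ->
  0 < eps -> eps < 1 -> odd n ->
  16 * ln (1 / (alpha * beta)) <= n%:R * eps ->
  is_dataset m n x -> CTM n x ->
  1 - beta <= DPExpMed_prob m alpha eps n x
    [set l | ploss m alpha n x l <= 200 / eps * Num.max 1 (ln (1 / (alpha * beta * n%:R * eps)))].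
Proof.
move=> m0 a0 a3 b0 b3 e0 e1 n_odd n_eps xD ctm.
have ab0 : 0 < alpha * beta by exact: mulr_gt0.
have ab9 : alpha * beta < 1 / 9 by have := ltr_pM (ltW a0) (ltW b0) a3 b3; lra.
have n14 : (14 < n)%N.
  have := ln_inv_ge ab0 ab9; have : n%:R * eps <= n%:R :> R by rewrite ler_piMr // ltW.
  by rewrite -(ltr_nat R); lra.
have [k3 kp0 n_kp n_k2] := medidx_large n_odd n14.
set Lam := Num.max 1 _.
have L1 : 1 <= Lam by rewrite le_max lexx.
have L_ane : expR (- Lam) <= alpha * beta * n%:R * eps.
  have abne : 0 < alpha * beta * n%:R * eps by rewrite !mulr_gt0 // ltr0n (ltn_trans _ n14).
  by rewrite -[leRHS](expRN_ln_inv abne) ler_expR lerN2 le_max lexx orbT.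
apply: (DPExpMed_prob_ge xD n_odd m0 a0 e0); [lra | exact: ltW | | ].
  by rewrite mulr_ge0 ?divr_ge0 ?ltW //; lra.
move=> tk; apply: le_trans (mass_outside_band_le xD n_odd m0 a0 ctm e0 k3 tk) _.
have head := expR_half_pow_le ab0 ab9 (ltW e0) n_k2 n_eps.
have shells := shells_term_le m0 ab0 e0 (ltW e1) L1 kp0 (ltn_trans (ltn0Sn 13) n14) n_kp
                 L_ane (truncnS_gt _).
apply: le_trans (lerD (ler_wpM2r (ltW m0) head) shells) _.
by rewrite -mulrDl -splitr.
Qed.

Theorem theorem7p9 :
  exists C C' : Rdefinitions.R, 0 < C /\ 0 < C' /\
  forall (m alpha beta eps : Rdefinitions.R) (n : nat) (x : nat -> Rdefinitions.R),
    0 < m ->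
    0 < alpha -> alpha < 1 / 3 ->
    0 < beta -> beta < 1 / 3 ->
    0 < eps -> eps < 1 ->
    odd n ->
    C * ln (1 / (alpha * beta)) <= n%:R * eps ->
    is_dataset m n x -> CTM n x ->
    1 - beta <=
      DPExpMed_prob m alpha eps n x
        [set l | ploss m alpha n x l <=
                 C' / eps * Num.max 1 (ln (1 / (alpha * beta * n%:R * eps)))].
Proof.
exists 16, 200; do 2 split => //.
by move=> m alpha beta eps n x; exact: DPExpMed_accuracy.
Qed.
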